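(* Let $A\in\mathbb{R}^{n\times n}$ be symmetric positive definite. Let $S$ be the operator of one V-cycle of the classical (Ruge–Stüben) algebraic multigrid method for $A$ with Gauss–Seidel smoothing on every level: with levels $l=L,\dots,0$, $A_L=A$, full-column-rank interpolation matrices $P_l$ and $A_l=P_l^TA_{l+1}P_l$, the level operators are defined recursively by $B_0=A_0^{-1}$ and $I-B_lA_l=(I-S_l^TA_l)(I-P_{l-1}B_{l-1}P_{l-1}^TA_l)(I-S_lA_l)$ for $l\ge1$, where $S_l$ is the (forward) Gauss–Seidel smoother for $A_l$, and $S=B_L$. Let $B$ be the ILU($k$) preconditioner for $A$, which for SPD $A$ is the incomplete Cholesky preconditioner IC($k$), $B=(LL^T)^{-1}$. Define $B_{\mathrm{co}}$ by $I-B_{\mathrm{co}}A=(I-S^TA)(I-BA)(I-SA)$. Then $B_{\mathrm{co}}$ is symmetric positive definite.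
   Context: ILU($k$)/IC($k$) is incomplete factorization by Gaussian elimination in which fill-in entries are dropped according to their level of fill: initially $\mathcal L_{ij}=0$ if $a_{ij}\ne0$ or $i=j$ and $\mathcal L_{ij}=\infty$ otherwise; when an entry is updated by $a_{ij}:=a_{ij}-a_{ik}a_{kj}$, its level is updated by $\mathcal L_{ij}=\min\{\mathcal L_{ij},\mathcal L_{ik}+\mathcal L_{kj}+1\}$, and entries with level greater than $k$ are set to zero. The incomplete Cholesky factor $L$ is lower triangular and the factorization is assumed to be well defined (real, with positive diagonal). Gauss–Seidel smoother $S_l=(D_l+L_l)^{-1}$ with $D_l$, $L_l$ the diagonal and strictly lower triangular parts of $A_l$; transposes are Euclidean transposes. *)

From HB Require Import structures.
From mathcomp Require Import all_boot all_order all_algebra.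
Set Implicit Arguments. Unset Strict Implicit. Unset Printing Implicit Defensive.
Import Order.TTheory GRing.Theory Num.Theory.
Local Open Scope ring_scope.

Section Defs.
Variable R : rcfType.

Definition spd (n : nat) (M : 'M[R]_n) : Prop :=
  M^T = M /\ forall x : 'cV[R]_n, x != 0 -> 0 < (x^T *m M *m x) 0 0.

Definition gs (n : nat) (M : 'M[R]_n) : 'M[R]_n :=
  invmx (\matrix_(i, j) if (j <= i)%N then M i j else 0).

(* ---------- levels of fill (None = infinity) ---------- *)
Definition lev_add1 (a b : option nat) : option nat :=
  match a, b with Some x, Some y => Some (x + y).+1 | _, _ => None end.
Definition lev_min (a b : option nat) : option nat :=
  match a, b with
  | Some x, Some y => Some (minn x y)
  | Some x, None => Some x
  | None, y => y end.

Definition lev0 (n : nat) (M : 'M[R]_n) : 'I_n -> 'I_n -> option nat :=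
  fun i j => if (M i j != 0) || (i == j) then Some 0%N else None.

Definition lev_step (n : nat) (lev : 'I_n -> 'I_n -> option nat) (m : 'I_n) :
  'I_n -> 'I_n -> option nat :=
  fun i j => if (m < i)%N && (m < j)%N then lev_min (lev i j) (lev_add1 (lev i m) (lev m j))
             else lev i j.

Definition fill_level (n : nat) (M : 'M[R]_n) : 'I_n -> 'I_n -> option nat :=
  foldl (@lev_step n) (lev0 M) (enum 'I_n).

Definition keep (k n : nat) (M : 'M[R]_n) (i j : 'I_n) : bool :=
  if fill_level M i j is Some l then (l <= k)%N else false.

Definition chol_step (n : nat) (kp : 'I_n -> 'I_n -> bool) (W : 'M[R]_n) (m : 'I_n) : 'M[R]_n :=
  let p := Num.sqrt (W m m) in
  let c := fun i : 'I_n => if kp i m then W i m / p else 0 in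
  \matrix_(i, j)
    if (i == m) && (j == m) then p
    else if (j == m) && (m < i)%N then c i
    else if (m < i)%N && (m < j)%N then (if kp i j then W i j - c i * c j else 0)
    else W i j.

Definition ic_factor (k n : nat) (M : 'M[R]_n) : 'M[R]_n :=
  let W := foldl (chol_step (keep k M)) M (enum 'I_n) in
  \matrix_(i, j) if (j <= i)%N then W i j else 0.

Definition ic_prec (k n : nat) (M : 'M[R]_n) : 'M[R]_n :=
  let Lf := ic_factor k M in invmx (Lf *m Lf^T).

(* ---------- V-cycle AMG with Gauss-Seidel smoothing ----------
   Levels are indexed by depth d = L - l (d = 0 finest, d = L coarsest);
   m d = size at depth d; P d : 'M_(m d, m d.+1) interpolates from depth d+1 to d. *)
Variable m : nat -> nat.

Fixpoint Alev (A : 'M[R]_(m 0%N)) (P : forall d, 'M[R]_(m d, m d.+1)) (d : nat) : 'M[R]_(m d) :=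
  match d as d0 return 'M[R]_(m d0) with
  | O => A
  | S d' => (P d')^T *m Alev A P d' *m P d'
  end.

(* Bv A P j d : the V-cycle operator at depth d where j more coarse levels lie below;
   Bv 0 d = A_d^{-1};  I - B_d A_d = (I - S_d^T A_d)(I - P_d B_{d+1} P_d^T A_d)(I - S_d A_d). *)
Fixpoint Bv (A : 'M[R]_(m 0%N)) (P : forall d, 'M[R]_(m d, m d.+1)) (j d : nat) : 'M[R]_(m d) :=
  match j with
  | O => invmx (Alev A P d)
  | S j' =>
      let Ad := Alev A P d in
      let Sd := gs Ad in
      let Bc := Bv A P j' d.+1 in
      (1%:M - (1%:M - Sd^T *m Ad) *m (1%:M - P d *m Bc *m (P d)^T *m Ad)
              *m (1%:M - Sd *m Ad)) *m invmx Ad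
  end.

Definition vcycle (A : 'M[R]_(m 0%N)) (P : forall d, 'M[R]_(m d, m d.+1)) (L : nat) : 'M[R]_(m 0%N) :=
  Bv A P L 0%N.

End Defs.

Definition Bco (R : rcfType) (n : nat) (A S B : 'M[R]_n) : 'M[R]_n :=
  (1%:M - (1%:M - S^T *m A) *m (1%:M - B *m A) *m (1%:M - S *m A)) *m invmx A.

From HB Require Import structures.
From mathcomp Require Import all_boot all_order all_algebra.
From mathcomp Require Import ring lra.
Import Order.TTheory GRing.Theory Num.Theory.
Local Open Scope ring_scope.
Set Implicit Arguments. Unset Strict Implicit.

(** Call a symmetric B bounded by A⁻¹ when 0 ≤ ABA ≤ A.  The exact inverse is
    bounded, and the Galerkin coarse correction P B_c Pᵀ inherits the bound from
    B_c on PᵀAP, since P(PᵀAP)⁻¹PᵀA is an A-orthogonal projection.  For the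
    symmetrized composition B_co with smoother S one has, with z = (I-SA)y,
      yᵀA B_co A y = ‖y‖²_A - ‖z‖²_A + (Az)ᵀB(Az),
    so B_co is again bounded whenever B is and I-SA is nonexpansive in ‖·‖_A.
    Gauss–Seidel is such a smoother (T + Tᵀ - A is the positive diagonal of A
    for its splitting matrix T), so by induction on the levels the V-cycle S is
    bounded, and then I-SA is nonexpansive too.  With B the SPD IC(k)
    preconditioner the identity gives yᵀA B_co A y > 0 for y ≠ 0: either z = 0
    and the value is ‖y‖²_A, or the B-term is positive. *)

Section BilinearForm.
Variable R : comPzRingType.

Definition bform a b (M : 'M[R]_(a, b)) (x : 'cV[R]_a) (y : 'cV[R]_b) : R :=
  (x^T *m M *m y) 0 0.

Lemma bform_mulmxr a b c (M : 'M[R]_(a, b)) (N : 'M[R]_(b, c)) x y :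
  bform M x (N *m y) = bform (M *m N) x y.
Proof. by rewrite /bform !mulmxA. Qed.

Lemma bform_mulmxl a b c (M : 'M[R]_(a, b)) (N : 'M[R]_(a, c)) x y :
  bform M (N *m x) y = bform (N^T *m M) x y.
Proof. by rewrite /bform trmx_mul !mulmxA. Qed.

Lemma bformEl a b (M : 'M[R]_(a, b)) x y : bform M x y = bform 1%:M (M^T *m x) y.
Proof. by rewrite bform_mulmxl trmxK mulmx1. Qed.

Lemma bformEr a b (M : 'M[R]_(a, b)) x y : bform M x y = bform 1%:M x (M *m y).
Proof. by rewrite bform_mulmxr mul1mx. Qed.

Lemma bform_conj a b (N : 'M[R]_(a, b)) (M : 'M[R]_a) x y :
  bform (N^T *m M *m N) x y = bform M (N *m x) (N *m y).
Proof. by rewrite bform_mulmxl bform_mulmxr. Qed.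

Lemma bform_tr a b (M : 'M[R]_(a, b)) x y : bform M x y = bform M^T y x.
Proof.
rewrite /bform; transitivity ((x^T *m M *m y)^T 0 0); first by rewrite [RHS]mxE.
by rewrite !trmx_mul trmxK mulmxA.
Qed.

Lemma bform_sym a (M : 'M[R]_a) x y : M^T = M -> bform M x y = bform M y x.
Proof. by move=> sM; rewrite bform_tr sM. Qed.

Lemma bformBl a b (M : 'M[R]_(a, b)) x1 x2 y :
  bform M (x1 - x2) y = bform M x1 y - bform M x2 y.
Proof. by rewrite /bform linearB /= !mulmxBl !mxE. Qed.

Lemma bformBr a b (M : 'M[R]_(a, b)) x y1 y2 :
  bform M x (y1 - y2) = bform M x y1 - bform M x y2.
Proof. by rewrite /bform !mulmxBr !mxE. Qed.

Lemma bformD a b (M N : 'M[R]_(a, b)) x y :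
  bform (M + N) x y = bform M x y + bform N x y.
Proof. by rewrite /bform mulmxDr mulmxDl mxE. Qed.

Lemma bformB a b (M N : 'M[R]_(a, b)) x y :
  bform (M - N) x y = bform M x y - bform N x y.
Proof. by rewrite /bform mulmxBr mulmxBl !mxE. Qed.

Lemma bform0l a b (M : 'M[R]_(a, b)) y : bform M 0 y = 0.
Proof. by rewrite /bform linear0 !mul0mx mxE. Qed.

End BilinearForm.

Section Triangular.
Variable F : fieldType.

Lemma trig_unitmx n (T : 'M[F]_n) :
  is_trig_mx T -> (forall i, T i i != 0) -> T \in unitmx.
Proof. by move=> Tt T0; rewrite unitmxE det_trig // unitfE; apply/prodf_neq0. Qed.

End Triangular.

Section SPD.
Variable R : rcfType.
Implicit Types n p : nat.

Lemma bform1_gt0 n (u : 'cV[R]_n) : u != 0 -> 0 < bform 1%:M u u.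
Proof.
move=> u0; have -> : bform 1%:M u u = \sum_i u i 0 ^+ 2.
  by rewrite /bform mulmx1 mxE; apply: eq_bigr => i _; rewrite mxE expr2.
rewrite lt_def sumr_ge0 ?andbT => [|i _]; last exact: sqr_ge0.
apply: contra u0 => /eqP/psumr_eq0P u2_0; apply/eqP/matrixP => i j.
rewrite (ord1 j) mxE; apply/eqP; rewrite -sqrf_eq0 u2_0 // => k _.
exact: sqr_ge0.
Qed.

Lemma spd_ge0 n (A : 'M[R]_n) x : spd A -> 0 <= bform A x x.
Proof.
move=> [_ Apos]; have [->|x0] := eqVneq x 0; first by rewrite bform0l.
exact/ltW/Apos.
Qed.

Lemma spd_unitmx n (A : 'M[R]_n) : spd A -> A \in unitmx.
Proof.
move=> [sA Apos]; rewrite -row_free_unit -kermx_eq0.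
apply/rowV0P => v /sub_kermxP vA0; apply/eqP; apply: contraT => v0.
have vT0 : v^T != 0 by rewrite -(inj_eq (@trmx_inj _ _ _)) trmxK linear0.
by have := Apos _ vT0; rewrite trmxK vA0 mul0mx mxE ltxx.
Qed.

Lemma spd_diag_gt0 n (A : 'M[R]_n) i : spd A -> 0 < A i i.
Proof.
move=> [_ Apos]; have ei0 : (delta_mx i 0 : 'cV[R]_n) != 0.
  by apply/eqP => /matrixP/(_ i 0); rewrite !mxE !eqxx => /eqP; rewrite oner_eq0.
by have := Apos _ ei0; rewrite trmx_delta -rowE -colE !mxE.
Qed.

Lemma spd_invmx n (A : 'M[R]_n) : spd A -> spd (invmx A).
Proof.
move=> spdA; have Au := spd_unitmx spdA; split; first by rewrite trmx_inv spdA.1.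
move=> x x0; set v := invmx A *m x.
have xE : x = A *m v by rewrite mulKVmx.
have v0 : v != 0 by apply: contra x0 => /eqP v0; rewrite xE v0 mulmx0.
by rewrite xE trmx_mul spdA.1 mulmxK // mulmxA; apply: spdA.2.
Qed.

Lemma spd_galerkin n p (A : 'M[R]_n) (P : 'M[R]_(n, p)) :
  spd A -> \rank P = p -> spd (P^T *m A *m P).
Proof.
move=> spdA rP; split; first by rewrite !trmx_mul trmxK spdA.1 mulmxA.
move=> x x0; rewrite -/(bform _ x x) bform_conj; apply: spdA.2.
have freePT : row_free P^T by rewrite /row_free mxrank_tr rP.
apply: contra x0 => /eqP/(congr1 trmx); rewrite trmx_mul linear0 => /eqP.
by rewrite mulmx_free_eq0 // => /eqP/(congr1 trmx); rewrite trmxK linear0 => ->.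
Qed.

Lemma spd_LLt n (T : 'M[R]_n) :
  is_trig_mx T -> (forall i, T i i != 0) -> spd (T *m T^T).
Proof.
move=> Tt T0; have TTu : T^T \in unitmx by rewrite unitmx_tr trig_unitmx.
split; first by rewrite trmx_mul trmxK.
move=> x x0; rewrite -/(bform _ x x).
have -> : T *m T^T = T^T^T *m 1%:M *m T^T by rewrite trmxK mulmx1.
rewrite bform_conj.
by apply: bform1_gt0; apply: contra x0 => /eqP Tx0; rewrite -(mulKmx TTu x) Tx0 mulmx0.
Qed.

Definition inv_bounded n (B A : 'M[R]_n) :=
  [/\ B^T = B, forall y, 0 <= bform B (A *m y) (A *m y)
   & forall y, bform B (A *m y) (A *m y) <= bform A y y].

Definition energy_nonexpansive n (A S : 'M[R]_n) :=
  forall y, bform A ((1%:M - S *m A) *m y) ((1%:M - S *m A) *m y) <= bform A y y.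

Lemma inv_bounded_invmx n (A : 'M[R]_n) : spd A -> inv_bounded (invmx A) A.
Proof.
move=> spdA; have Au := spd_unitmx spdA.
have invAE y : bform (invmx A) (A *m y) (A *m y) = bform A y y.
  by rewrite bform_mulmxl bform_mulmxr spdA.1 mulmxKV.
by split=> [|y|y]; rewrite ?trmx_inv ?spdA.1 ?invAE ?spd_ge0.
Qed.

Lemma inv_bounded_galerkin n p (A : 'M[R]_n) (P : 'M[R]_(n, p)) Bc :
  spd A -> \rank P = p -> inv_bounded Bc (P^T *m A *m P) ->
  inv_bounded (P *m Bc *m P^T) A.
Proof.
move=> spdA rP [sBc Bc_ge0 Bc_le]; set Ac := P^T *m A *m P.
have Acu : Ac \in unitmx by apply/spd_unitmx/spd_galerkin.
have coarseE y : let u := invmx Ac *m (P^T *m (A *m y)) in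
    bform (P *m Bc *m P^T) (A *m y) (A *m y) = bform Bc (Ac *m u) (Ac *m u).
  by rewrite /= mulKVmx // -[P in P *m Bc]trmxK bform_conj.
(* the coarse solution is an A-orthogonal projection of y, hence ‖Pu‖_A ≤ ‖y‖_A *)
have proj_le y : let u := invmx Ac *m (P^T *m (A *m y)) in bform Ac u u <= bform A y y.
  move=> u; have Acu_E : Ac *m u = P^T *m (A *m y) by rewrite mulKVmx.
  have PuyE : bform A (P *m u) y = bform Ac u u.
    by rewrite bform_mulmxl bformEr -mulmxA -Acu_E -bformEr.
  have yPuE : bform A y (P *m u) = bform Ac u u by rewrite bform_sym ?spdA.1.
  have := spd_ge0 (y - P *m u) spdA.
  have PuPuE : bform A (P *m u) (P *m u) = bform Ac u u by rewrite bform_conj.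
  by rewrite !bformBl !bformBr PuyE yPuE PuPuE; lra.
split=> [|y|y]; first by rewrite !trmx_mul trmxK sBc mulmxA.
  by rewrite coarseE.
by rewrite coarseE; apply: le_trans (Bc_le _) (proj_le y).
Qed.

Lemma inv_bounded_nonexpansive n (A S : 'M[R]_n) :
  spd A -> inv_bounded S A -> energy_nonexpansive A S.
Proof.
move=> spdA [sS S_ge0 S_le] y; set w := A *m y.
have -> : (1%:M - S *m A) *m y = y - S *m w by rewrite mulmxBl mul1mx -mulmxA.
set s := bform S w w; set t := bform A (S *m w) (S *m w).
have ySwE : bform A y (S *m w) = s by rewrite bformEl spdA.1 -bformEr.
have SwyE : bform A (S *m w) y = s by rewrite bform_sym ?spdA.1.
have wASwE : bform S w (A *m (S *m w)) = t by rewrite bformEl sS -bformEr.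
have ASwwE : bform S (A *m (S *m w)) w = t by rewrite bform_sym ?sS.
(* t ≤ s: positivity of S at y - Sw together with S ≤ A⁻¹ at Sw *)
have := S_ge0 (y - S *m w); rewrite mulmxBr -/w !bformBl !bformBr wASwE ASwwE -/s.
have := S_le (S *m w); have := S_ge0 y.
by rewrite -/w -/s -/t ySwE SwyE; lra.
Qed.

(* If T is a splitting matrix for A (error propagator I - T⁻¹A), then
   ‖(I - T⁻¹A)y‖²_A = ‖y‖²_A - wᵀ(T + Tᵀ - A)w with w = T⁻¹Ay. *)
Lemma splitting_nonexpansive n (A T : 'M[R]_n) :
  A^T = A -> T \in unitmx -> (forall w, 0 <= bform (T + T^T - A) w w) ->
  energy_nonexpansive A (invmx T).
Proof.
move=> sA Tu TA_ge0 y; set w := invmx T *m (A *m y).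
have -> : (1%:M - invmx T *m A) *m y = y - w by rewrite mulmxBl mul1mx -mulmxA.
have Tw : T *m w = A *m y by rewrite mulKVmx.
have wyE : bform A w y = bform T w w by rewrite bformEr -Tw -bformEr.
have ywE : bform A y w = bform T w w by rewrite bform_sym.
have := TA_ge0 w; rewrite bformB bformD -bform_tr.
by rewrite !bformBl !bformBr wyE ywE; lra.
Qed.

Lemma gs_nonexpansive n (A : 'M[R]_n) : spd A -> energy_nonexpansive A (gs A).
Proof.
move=> spdA; set T := \matrix_(i, j) (if (j <= i)%N then A i j else 0 : R).
have Tt : is_trig_mx T by apply/is_trig_mxP => i j ij; rewrite mxE leqNgt ij.
have Tu : T \in unitmx.
  by apply: trig_unitmx => // i; rewrite mxE leqnn lt0r_neq0 ?spd_diag_gt0.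
apply: splitting_nonexpansive spdA.1 Tu _ => w.
have -> : T + T^T - A = diag_mx (\row_i A i i).
  have Asym i j : A j i = A i j by rewrite -{2}spdA.1 mxE.
  apply/matrixP => i j; rewrite !mxE (Asym i j).
  have [->|ij] := eqVneq i j; first by rewrite leqnn mulr1n addrK.
  rewrite mulr0n; case: (ltngtP i j) => [_|_|/val_inj eij]; last by rewrite eij eqxx in ij.
    by rewrite add0r subrr.
  by rewrite addr0 subrr.
rewrite /bform mul_mx_diag mxE sumr_ge0 // => j _; rewrite !mxE.
by have := spd_diag_gt0 j spdA; nra.
Qed.

Lemma Bco_tr n (A S C : 'M[R]_n) :
  A^T = A -> A \in unitmx -> C^T = C -> (Bco A S C)^T = Bco A S C.
Proof.
move=> sA Au sC; set X := (invmx A - S^T) *m A *m (invmx A - C) *m A *m (invmx A - S).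
have XE : (1%:M - S^T *m A) *m (1%:M - C *m A) *m (1%:M - S *m A) *m invmx A = X.
  have l1 : (invmx A - S^T) *m A = 1%:M - S^T *m A by rewrite mulmxBl mulVmx.
  have l2 : (invmx A - C) *m A = 1%:M - C *m A by rewrite mulmxBl mulVmx.
  have r3 : (1%:M - S *m A) *m invmx A = invmx A - S by rewrite mulmxBl mul1mx mulmxK.
  by rewrite /X l1 -(mulmxA _ _ A) l2 -r3 !mulmxA.
have sX : X^T = X.
  have tS : (invmx A - S)^T = invmx A - S^T by rewrite linearB /= trmx_inv sA.
  have tC : (invmx A - C)^T = invmx A - C by rewrite linearB /= trmx_inv sA sC.
  have tSt : (invmx A - S^T)^T = invmx A - S by rewrite linearB /= trmx_inv sA trmxK.
  by rewrite /X !trmx_mul tS tC tSt sA !mulmxA.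
by rewrite /Bco mulmxBl mul1mx XE linearB /= trmx_inv sA sX.
Qed.

Lemma Bco_energy n (A S C : 'M[R]_n) y :
  A^T = A -> A \in unitmx ->
  let z := (1%:M - S *m A) *m y in
  bform (Bco A S C) (A *m y) (A *m y) =
  bform A y y - bform A z z + bform C (A *m z) (A *m z).
Proof.
move=> sA Au z; set Q := 1%:M - S *m A.
have QtE : Q^T = 1%:M - A *m S^T by rewrite /Q linearB /= trmx1 trmx_mul sA.
have AQE : A *m (1%:M - S^T *m A) = Q^T *m A.
  by rewrite QtE mulmxBr mulmxBl mulmx1 mul1mx mulmxA.
have ABcoAE : A^T *m Bco A S C *m A = A - Q^T *m A *m Q + Q^T *m (A^T *m C *m A) *m Q.
  rewrite sA /Bco mulmxA mulmxKV // mulmxBr mulmx1 !mulmxA AQE -/Q.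
  by rewrite (mulmxBr (Q^T *m A)) mulmx1 mulmxBl !mulmxA opprD opprK addrA.
by rewrite bform_mulmxl bform_mulmxr ABcoAE bformD bformB !bform_conj.
Qed.

Lemma inv_bounded_Bco n (A S C : 'M[R]_n) :
  spd A -> energy_nonexpansive A S -> inv_bounded C A -> inv_bounded (Bco A S C) A.
Proof.
move=> spdA S_ne [sC C_ge0 C_le]; have Au := spd_unitmx spdA.
split=> [|y|y]; first exact: Bco_tr spdA.1 Au sC.
  by rewrite Bco_energy ?spdA.1 //; have := S_ne y; have := C_ge0 ((1%:M - S *m A) *m y); lra.
by rewrite Bco_energy ?spdA.1 //; have := C_le ((1%:M - S *m A) *m y); lra.
Qed.

Lemma spd_Bco n (A S C : 'M[R]_n) :
  spd A -> energy_nonexpansive A S -> spd C -> spd (Bco A S C).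
Proof.
move=> spdA S_ne spdC; have Au := spd_unitmx spdA.
split=> [|x x0]; first exact: Bco_tr spdA.1 Au spdC.1.
set y := invmx A *m x; have xE : x = A *m y by rewrite mulKVmx.
have y0 : y != 0 by apply: contra x0 => /eqP y0; rewrite xE y0 mulmx0.
rewrite -/(bform _ x x) xE Bco_energy ?spdA.1 //; set z := (1%:M - S *m A) *m y.
have y_gt0 : 0 < bform A y y := spdA.2 y y0.
have := S_ne y; rewrite -/z.
have [->|z0] := eqVneq z 0; first by rewrite mulmx0 !bform0l; lra.
have Az0 : A *m z != 0 by apply: contra z0 => /eqP Az0; rewrite -(mulKmx Au z) Az0 mulmx0.
have Cz_gt0 : 0 < bform C (A *m z) (A *m z) := spdC.2 _ Az0.
lra.
Qed.

Lemma spd_ic_prec k n (A : 'M[R]_n) :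
  (forall i, 0 < ic_factor k A i i) -> spd (ic_prec k A).
Proof.
move=> diag_gt0; apply/spd_invmx/spd_LLt => [|i]; last exact: lt0r_neq0.
by apply/is_trig_mxP => i j ij; rewrite mxE leqNgt ij.
Qed.

End SPD.

Section VCycle.
Variables (R : rcfType) (m : nat -> nat) (L : nat).
Variables (A : 'M[R]_(m 0%N)) (P : forall d, 'M[R]_(m d, m d.+1)).
Hypotheses (spdA : spd A) (rankP : forall d, (d < L)%N -> \rank (P d) = m d.+1).

Lemma spd_Alev d : (d <= L)%N -> spd (Alev A P d).
Proof. by elim: d => [|d IHd] dL //=; apply: spd_galerkin; [apply/IHd/ltnW|apply: rankP]. Qed.

Lemma BvS j d : Bv A P j.+1 d =
  Bco (Alev A P d) (gs (Alev A P d)) (P d *m Bv A P j d.+1 *m (P d)^T).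
Proof. by []. Qed.

Lemma inv_bounded_Bv j d : (j + d <= L)%N -> inv_bounded (Bv A P j d) (Alev A P d).
Proof.
elim: j d => [|j IHj] d jdL; first exact/inv_bounded_invmx/spd_Alev.
have spdAd : spd (Alev A P d) by apply: spd_Alev; apply: leq_trans jdL; apply: leq_addl.
rewrite BvS; apply: inv_bounded_Bco => //; first exact: gs_nonexpansive.
apply: inv_bounded_galerkin => //.
  by apply: rankP; apply: leq_trans jdL; rewrite addSn ltnS leq_addl.
by apply: IHj; rewrite addnS -addSn.
Qed.

End VCycle.

Theorem corollary3p2 (R : rcfType) (m : nat -> nat) (L : nat)
    (A : 'M[R]_(m 0%N)) (P : forall d, 'M[R]_(m d, m d.+1)) (k : nat) :
  spd A ->
  (forall d, (d < L)%N -> \rank (P d) = m d.+1) ->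
  (forall i, 0 < ic_factor k A i i) ->
  spd (Bco A (vcycle A P L) (ic_prec k A)).
Proof.
move=> spdA rankP ic_diag_gt0.
have S_bounded : inv_bounded (vcycle A P L) A.
  by apply: (inv_bounded_Bv spdA rankP); rewrite addn0.
apply: spd_Bco => //; last exact: spd_ic_prec.
exact: inv_bounded_nonexpansive.
Qed.
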